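(* Let $D$ be a positive integer that is not a sum of two integer squares, and let $\mathcal{C}$ be one of the following circles: $\mathcal{C}_D: |z|^2-D=0$; $\mathcal{C}_{D,1}: 2|z|^2+z+\bar z-\frac{D-1}{2}=0$ (when $D\equiv1\pmod4$); $\mathcal{C}_{D,2}: 2|z|^2+iz-i\bar z-\frac{D-1}{2}=0$ (when $D\equiv1\pmod4$); $\mathcal{C}_{D,3}: 2|z|^2+(1+i)z+(1-i)\bar z-\frac{D-2}{2}=0$ (when $D\equiv2\pmod4$). Then the image of $\mathcal{C}$ under $z\mapsto z+1$ (i.e. under $\begin{pmatrix}1&1\\0&1\end{pmatrix}$) intersects $\mathcal{C}$ nontrivially.
   Context: ''Intersect nontrivially'' means the two circles cross, i.e. meet in exactly two points. *)

(* circles in the complex plane R[i] over a real closed field R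
   (R = the real numbers is the case of the paper; statement is for every rcfType). *)
From HB Require Import structures.
From mathcomp Require Import all_boot all_order all_algebra.
From mathcomp Require Import complex.
Unset Printing Implicit Defensive.
Import Order.TTheory GRing.Theory Num.Theory.
Local Open Scope ring_scope.
Local Open Scope complex_scope.

Inductive circle_kind := C_D | C_D1 | C_D2 | C_D3.

Definition admissible (D : nat) (k : circle_kind) : Prop :=
  match k with
  | C_D => True
  | C_D1 => (D %% 4 = 1)%N
  | C_D2 => (D %% 4 = 1)%N
  | C_D3 => (D %% 4 = 2)%N
  end.

Definition on_circle (R : rcfType) (D : nat) (k : circle_kind) (z : R[i]) : Prop :=
  match k with
  | C_D => z * z^* - (D%:R : R)%:C = 0
  | C_D1 => 2 * (z * z^*) + z + z^* - (((D%:R - 1) / 2 : R))%:C = 0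
  | C_D2 => 2 * (z * z^*) + 'i * z - 'i * z^* - (((D%:R - 1) / 2 : R))%:C = 0
  | C_D3 => 2 * (z * z^*) + (1 + 'i) * z + (1 - 'i) * z^*
              - (((D%:R - 2) / 2 : R))%:C = 0
  end.

Definition on_translate (R : rcfType) (D : nat) (k : circle_kind) (w : R[i]) : Prop :=
  exists2 z, on_circle R D k z & w = z + 1.

(* Two sets of points intersect nontrivially: they meet in exactly two points. *)
Definition meet_in_exactly_two {R : rcfType} (P Q : R[i] -> Prop) : Prop :=
  exists z1 z2 : R[i], z1 <> z2 /\
    forall z, (P z /\ Q z) <-> (z = z1 \/ z = z2).

From mathcomp Require Import all_boot all_order all_algebra.
From mathcomp Require Import complex.
From mathcomp Require Import ring lra.
Import Order.TTheory GRing.Theory Num.Theory.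

(* Each circle C and its translate C + 1 have the same radius, so their common
   points lie on the perpendicular bisector of the two centres, a vertical line
   Re z = x0.  On that line both equations reduce to (Im z - c)^2 = r, where
   r = D - 1/4 for C_D and r = (D - 1)/4 for the other three circles.  Since
   0 and 1 are sums of two squares, D >= 2, so r > 0 and there are exactly two
   solutions c +- sqrt r. *)

Local Open Scope ring_scope.
Local Open Scope complex_scope.

Lemma sum_of_two_squares_leq1 (n : nat) :
  (n <= 1)%N -> exists a b : int, n%:Z = a ^+ 2 + b ^+ 2.
Proof. by case: n => [|[|]] // _; [exists 0, 0 | exists 1, 0]. Qed.

Lemma meet_in_exactly_two_vertical {R : rcfType} {P Q : R[i] -> Prop}
    {x c r : R} :
  0 < r ->
  (forall a b, P (a +i* b) /\ Q (a +i* b) <-> a = x /\ (b - c) ^+ 2 = r) ->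
  meet_in_exactly_two P Q.
Proof.
move=> r_gt0 PQE; set s := Num.sqrt r.
have s_gt0 : 0 < s by rewrite sqrtr_gt0.
have sqr_s : s ^+ 2 = r by rewrite sqr_sqrtr // ltW.
exists (x +i* (c + s)), (x +i* (c - s)); split; first by case; lra.
case=> a b; rewrite PQE -sqr_s; split.
- case=> -> /eqP; rewrite eqf_sqr => /orP[] /eqP E; [left | right];
    congr (_ +i* _); lra.
- by case=> -[-> ->]; split=> //; ring.
Qed.

Section CircleAndTranslate.

Variables (R : rcfType) (D : nat).

Definition circle_form (k : circle_kind) (a b : R) : R :=
  match k with
  | C_D => a * a + b * b - D%:R
  | C_D1 => 2 * (a * a + b * b) + 2 * a - (D%:R - 1) / 2
  | C_D2 => 2 * (a * a + b * b) - 2 * b - (D%:R - 1) / 2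
  | C_D3 => 2 * (a * a + b * b) + 2 * a - 2 * b - (D%:R - 2) / 2
  end.

Definition radical_abscissa (k : circle_kind) : R :=
  match k with C_D | C_D2 => 1 / 2 | _ => 0 end.

Definition center_ordinate (k : circle_kind) : R :=
  match k with C_D | C_D1 => 0 | _ => 1 / 2 end.

Definition half_chord2 (k : circle_kind) : R :=
  match k with C_D => D%:R - 1 / 4 | _ => (D%:R - 1) / 4 end.

Lemma on_circleE k a b : on_circle R D k (a +i* b) <-> circle_form k a b = 0.
Proof.
case: k => /=; split=> [/eqP | H]; rewrite ?eq_complex /=.
all: try by move=> /andP[/eqP <- _]; ring.
all: by apply/eqP; rewrite eq_complex /=; apply/andP; split; apply/eqP;
  [rewrite -H; ring | ring].
Qed.

Lemma on_translateE k a b :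
  on_translate R D k (a +i* b) <-> circle_form k (a - 1) b = 0.
Proof.
have shift : (a - 1) +i* b = a +i* b - 1.
  by apply/eqP; rewrite eq_complex /=; apply/andP; split; apply/eqP; ring.
rewrite -on_circleE shift; split=> [[z Hz ->] | H]; first by rewrite addrK.
by exists (a +i* b - 1); rewrite ?subrK.
Qed.

Lemma circle_translate_meetE k a b :
  circle_form k (a - 1) b = 0 /\ circle_form k a b = 0 <->
  a = radical_abscissa k /\ (b - center_ordinate k) ^+ 2 = half_chord2 k.
Proof.
rewrite expr2; split=> [[H1 H2] | [-> H]].
- have Ea : a = radical_abscissa k by case: k H1 H2 => /= *; lra.
  by split=> //; move: H2; rewrite Ea; case: k {Ea H1} => /= H2; lra.
- by move: H; case: k => /= H; split; lra.
Qed.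

Lemma half_chord2_gt0 k : (2 <= D)%N -> 0 < half_chord2 k.
Proof. by rewrite -(ler_nat R); case: k => /= D_ge2; lra. Qed.

End CircleAndTranslate.

Theorem lemma7p3 (R : rcfType) (D : nat) (k : circle_kind) :
  (0 < D)%N ->
  ~ (exists a b : int, (D%:Z = a ^+ 2 + b ^+ 2)%R) ->
  admissible D k ->
  meet_in_exactly_two (on_translate R D k) (on_circle R D k).
Proof.
move=> _ not_sum_of_two_squares _.
have D_ge2 : (2 <= D)%N.
  by rewrite ltnNge; apply/negP => /sum_of_two_squares_leq1.
apply: (meet_in_exactly_two_vertical (half_chord2_gt0 R D k D_ge2)) => a b.
rewrite on_translateE on_circleE; exact: circle_translate_meetE.
Qed.
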